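(* Consider the linear system $x(k+1)=Ax(k)+Bu(k)+w(k)$ with $x(k)\in\mathbb{R}^n$, $u(k)\in\mathbb{R}^m$, $A\in\mathbb{R}^{n\times n}$, $B\in\mathbb{R}^{n\times m}$, where $(w(k))_{k\ge 0}$ is an i.i.d. disturbance sequence (possibly with unbounded support) and $x(0)$ is given. Let $Q\succ 0$, $R\succ 0$, let $P$ be a stabilizing solution of the discrete algebraic Riccati equation and $K$ the corresponding gain, $$K=-(R+B^TPB)^{-1}B^TPA,\qquad P=A^TPA+A^TPBK+Q,$$ so that $A_K:=A+BK$ has all eigenvalues strictly inside the unit circle, and set $S=R+B^TPB$. Let $\mathcal{X}\subseteq\mathbb{R}^n$ and $\mathcal{U}\subseteq\mathbb{R}^m$ be convex sets containing the origin in their interior, and let $\mathcal{R}_x^{\bar p}\subseteq\mathbb{R}^n$, $\mathcal{R}_u^{\bar p}\subseteq\mathbb{R}^m$ be given sets (ellipsoids centred at the origin, as described in the context). Put $\mathcal{Z}:=\mathcal{X}\ominus\mathcal{R}_x^{\bar p}$, $\mathcal{V}:=\mathcal{U}\ominus\mathcal{R}_u^{\bar p}$, and let $\mathcal{Z}_F\subseteq\mathbb{R}^n$ be a terminal set satisfying $A_K\mathcal{Z}_F\subseteq\mathcal{Z}_F\subseteq\mathcal{Z}$ and $K\mathcal{Z}_F\subseteq\mathcal{V}$. Fix a horizon $N\ge 1$. Safety step (linear program): minimize $\sum_{k=0}^{N-1}[\alpha(k)+\beta(k)]$ over $v(0),\dots,v(N-1)\in\mathbb{R}^m$ and $\alpha(k),\beta(k)\in[0,1]$,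 $k=0,\dots,N-1$, subject to $z(0)=x(0)$, $z(k+1)=Az(k)+Bv(k)$, $z(k)\in\mathcal{X}\ominus(1-\alpha(k))\mathcal{R}_x^{\bar p}$, $v(k)\in\mathcal{U}\ominus(1-\beta(k))\mathcal{R}_u^{\bar p}$ for all $k\in\{0,\dots,N-1\}$, and $z(N)\in\mathcal{Z}_F$. Let $\alpha^*(0),\dots,\alpha^*(N-1)$, $\beta^*(0),\dots,\beta^*(N-1)$ be (part of) an optimal solution and extend them by $\alpha^*(k)=\beta^*(k)=0$ for all $k\ge N$. Performance step (solved at each time $k\ge 0$): minimize $\sum_{i=0}^{N-1}\|v_i(k)-Kz_i(k)\|_S^2+l(\xi(k))$ over $v_0(k),\dots,v_{N-1}(k)\in\mathbb{R}^m$ and $\xi(k)\in\{0,1\}$, subject to $z_{i+1}(k)=Az_i(k)+Bv_i(k)$, $z_i(k)\in\mathcal{X}\ominus(1-\alpha^*(k+i))\mathcal{R}_x^{\bar p}$, $v_i(k)\in\mathcal{U}\ominus(1-\beta^*(k+i))\mathcal{R}_u^{\bar p}$ for all $i\in\{0,\dots,N-1\}$, $z_0(k)=(1-\xi(k))x(k)+\xi(k)z_1(k-1)$, and $z_N(k)\in\mathcal{Z}_F$. Here $x(k)$ is the measured state at time $k$, $z_1(k-1)$ is the value $z_1$ from the solution computed at time $k-1$, with the convention $z_1(-1)=x(0)$, $l$ is a given linear or quadratic penalty function of $\xi$, and the input applied to the system is $u(k)=v_0(k)+K(x(k)-z_0(k))$. Then, if the safety-step linear program has a feasible solution, the performance-step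 optimization problem is recursively feasible: it is feasible at time $k=0$, and whenever it is feasible at time $k$ it is feasible at time $k+1$ (for any realization of the disturbance), hence it is feasible at every time $k\ge 0$.
   Context: For sets $A,B\subseteq\mathbb{R}^n$, $A\ominus B:=\{a\mid a+b\in A\ \forall b\in B\}$ (Pontryagin difference), and for a scalar $c$, $cB:=\{cb\mid b\in B\}$. $\|x\|_S^2=x^TSx$. The sets $\mathcal{R}_x^{\bar p}$ and $\mathcal{R}_u^{\bar p}$ are probabilistic reachable sets of the target probability levels $\bar p_x,\bar p_u\in[0,1]$ for the error $e(k+1)=A_Ke(k)+w(k)$ and for $Ke(k)$ respectively; in the paper they are the ellipsoids $\{x\mid x^T\Sigma_\infty^{-1}x\le\tilde p_x\}$ and $\{u \mid u^T(K\Sigma_\infty K^T)^{-1}u\le \tilde p_u\}$, where $\Sigma_\infty$ solves $A_K\Sigma_\infty A_K^T-\Sigma_\infty+\mathrm{var}(w)=0$ and $\tilde p=n/(1-\bar p)$ (or the inverse chi-squared CDF $\chi^2_n(\bar p)$ for Gaussian $w$); the disturbance is assumed to have zero mean and positive definite variance. *)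

From HB Require Import structures.
From mathcomp Require Import all_boot all_order all_algebra.
From mathcomp Require Import all_classical all_reals.
From mathcomp Require Import topology normedtype matrix_topology matrix_normedtype convex.
From mathcomp Require Import complex.

Set Implicit Arguments.
Unset Strict Implicit.
Unset Printing Implicit Defensive.

Import Order.TTheory GRing.Theory Num.Theory.
Import numFieldNormedType.Exports.
Local Open Scope classical_set_scope.
Local Open Scope ring_scope.

Section Defs.
Variable R : realType.

Definition posdef (n : nat) (M : 'M[R]_n) : Prop :=
  M^T = M /\ forall x : 'cV[R]_n, x != 0 -> 0 < (x^T *m M *m x) 0 0.

Definition schur_stable (n : nat) (M : 'M[R]_n) : Prop :=
  forall lam : R[i], root (char_poly (map_mx (real_complex R) M)) lam ->
    `|lam| < 1.

Definition pdiff (n : nat) (A B : set 'cV[R]_n) : set 'cV[R]_n :=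
  [set a | forall b, B b -> A (a + b)].

Definition scaleset (n : nat) (c : R) (B : set 'cV[R]_n) : set 'cV[R]_n :=
  (fun b => c *: b) @` B.

Definition mximage (m n : nat) (M : 'M[R]_(m, n)) (Z : set 'cV[R]_n) :
  set 'cV[R]_m := (fun z => M *m z) @` Z.

Definition ellipsoid (n : nat) (M : 'M[R]_n) (c : R) : set 'cV[R]_n :=
  [set x | (x^T *m M *m x) 0 0 <= c].

Definition convex0 (n : nat) (X : set 'cV[R]_n) : Prop :=
  (forall x y (t : R), X x -> X y -> 0 <= t <= 1 -> X (t *: x + (1 - t) *: y))
  /\ interior X (0 : 'cV[R]_n).

Fixpoint traj (n m : nat) (A : 'M[R]_n) (B : 'M[R]_(n, m))
    (z0 : 'cV[R]_n) (v : nat -> 'cV[R]_m) (k : nat) : 'cV[R]_n :=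
  match k with
  | 0 => z0
  | k'.+1 => A *m traj A B z0 v k' + B *m v k'
  end.

Definition safety_feasible (n m N : nat) (A : 'M[R]_n) (B : 'M[R]_(n, m))
    (X : set 'cV[R]_n) (U : set 'cV[R]_m) (Rx : set 'cV[R]_n) (Ru : set 'cV[R]_m)
    (ZF : set 'cV[R]_n) (x0 : 'cV[R]_n)
    (v : nat -> 'cV[R]_m) (alpha beta : nat -> R) : Prop :=
  (forall k, (k < N)%N ->
     [/\ 0 <= alpha k <= 1, 0 <= beta k <= 1,
         pdiff X (scaleset (1 - alpha k) Rx) (traj A B x0 v k)
       & pdiff U (scaleset (1 - beta k) Ru) (v k)])
  /\ ZF (traj A B x0 v N).

Definition safety_cost (N : nat) (alpha beta : nat -> R) : R :=
  \sum_(k < N) (alpha k + beta k).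

Definition safety_optimal (n m N : nat) (A : 'M[R]_n) (B : 'M[R]_(n, m))
    (X : set 'cV[R]_n) (U : set 'cV[R]_m) (Rx : set 'cV[R]_n) (Ru : set 'cV[R]_m)
    (ZF : set 'cV[R]_n) (x0 : 'cV[R]_n)
    (v : nat -> 'cV[R]_m) (alpha beta : nat -> R) : Prop :=
  safety_feasible N A B X U Rx Ru ZF x0 v alpha beta /\
  forall v' alpha' beta',
    safety_feasible N A B X U Rx Ru ZF x0 v' alpha' beta' ->
    safety_cost N alpha beta <= safety_cost N alpha' beta'.

Definition extend0 (N : nat) (a : nat -> R) (k : nat) : R :=
  if (k < N)%N then a k else 0.

Definition perf_z0 (n : nat) (xi : R) (x zprev : 'cV[R]_n) : 'cV[R]_n :=
  (1 - xi) *: x + xi *: zprev.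

(* feasibility of the performance-step problem at time k, given the measured
   state x = x(k) and zprev = z_1(k-1), for the decision (vs, xi):
   vs i = v_i(k) (i < N), xi = xi(k) in {0,1}. *)
Definition perf_feasible (n m N : nat) (A : 'M[R]_n) (B : 'M[R]_(n, m))
    (X : set 'cV[R]_n) (U : set 'cV[R]_m) (Rx : set 'cV[R]_n) (Ru : set 'cV[R]_m)
    (ZF : set 'cV[R]_n) (astar bstar : nat -> R)
    (k : nat) (x zprev : 'cV[R]_n) (vs : nat -> 'cV[R]_m) (xi : R) : Prop :=
  (xi = 0 \/ xi = 1) /\
  (forall i, (i < N)%N ->
     pdiff X (scaleset (1 - astar (k + i)%N) Rx)
           (traj A B (perf_z0 xi x zprev) vs i)
     /\ pdiff U (scaleset (1 - bstar (k + i)%N) Ru) (vs i))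
  /\ ZF (traj A B (perf_z0 xi x zprev) vs N).

(* z_1(k-1) along a sequence of decisions, with z_1(-1) = x(0) *)
Definition zprev_seq (n m : nat) (A : 'M[R]_n) (B : 'M[R]_(n, m))
    (xs : nat -> 'cV[R]_n) (x0 : 'cV[R]_n) (zp : nat -> 'cV[R]_n)
    (sol : nat -> (nat -> 'cV[R]_m) * R) (k : nat) : 'cV[R]_n :=
  match k with
  | 0 => x0
  | k'.+1 => traj A B (perf_z0 (sol k').2 (xs k') (zp k')) (sol k').1 1
  end.

End Defs.

From HB Require Import structures.
From mathcomp Require Import all_boot all_order all_algebra.
From mathcomp Require Import all_classical all_reals.
From mathcomp Require Import topology normedtype matrix_topology matrix_normedtype convex.
From mathcomp Require Import complex.
Set Implicit Arguments.
Unset Strict Implicit.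
Unset Printing Implicit Defensive.

Import Order.TTheory GRing.Theory Num.Theory.
Import numFieldNormedType.Exports.
Local Open Scope classical_set_scope.
Local Open Scope ring_scope.

(* Recursive feasibility is the usual shift argument.  From a feasible
   solution at time k, take xi = 1 (so the new initial state is the old z_1,
   whatever the disturbance) and the inputs v_1, ..., v_(N-1), K z_N.  The
   states z_1, ..., z_(N-1) meet the tightenings at times k+1, ..., k+N-1 as
   before; at time k+N the levels alpha*, beta* are zero by the extension, so
   z_N and K z_N only need to lie in X (-) Rx and U (-) Ru, which the terminal
   set guarantees, and (A + B K) z_N is again in the terminal set. *)

Section Elementary.
Variables (R : realType) (n : nat).

Lemma scaleset1 (S : set 'cV[R]_n) : scaleset 1 S = S.
Proof.
rewrite /scaleset (_ : (fun b => 1 *: b) = id); first exact: image_id.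
by apply: funext => b; rewrite scale1r.
Qed.

Lemma perf_z00 (x z : 'cV[R]_n) : perf_z0 0 x z = x.
Proof. by rewrite /perf_z0 subr0 scale1r scale0r addr0. Qed.

Lemma perf_z01 (x z : 'cV[R]_n) : perf_z0 1 x z = z.
Proof. by rewrite /perf_z0 subrr scale0r add0r scale1r. Qed.

Lemma extend0_ge (N k : nat) (a : nat -> R) : (N <= k)%N -> extend0 N a k = 0.
Proof. by rewrite /extend0 ltnNge => ->. Qed.

End Elementary.

Section ShiftedSolution.
Variables (R : realType) (n m N : nat).
Variables (A : 'M[R]_n) (B : 'M[R]_(n, m)) (K : 'M[R]_(m, n)).
Variables (X Rx ZF : set 'cV[R]_n) (U Ru : set 'cV[R]_m).

Lemma trajS z0 v k : traj A B z0 v k.+1 = A *m traj A B z0 v k + B *m v k.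
Proof. by []. Qed.

Definition shifted_input (z0 : 'cV[R]_n) (vs : nat -> 'cV[R]_m) (i : nat) :=
  if (i.+1 < N)%N then vs i.+1 else K *m traj A B z0 vs N.

Lemma traj_shifted_input z0 vs i : (i < N)%N ->
  traj A B (traj A B z0 vs 1) (shifted_input z0 vs) i = traj A B z0 vs i.+1.
Proof.
elim: i => [|i IH] lt_iN //=.
by rewrite IH ?(ltnW lt_iN) // /shifted_input lt_iN.
Qed.

Lemma traj_shifted_input_end z0 vs : (0 < N)%N ->
  traj A B (traj A B z0 vs 1) (shifted_input z0 vs) N
  = (A + B *m K) *m traj A B z0 vs N.
Proof.
move=> N_gt0; have [i eq_N] : exists i, N = i.+1 by exists N.-1; rewrite prednK.
rewrite {1}eq_N trajS traj_shifted_input ?eq_N //.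
by rewrite /shifted_input -eq_N ltnn mulmxDl mulmxA.
Qed.

Lemma perf_feasible_safety x0 v alpha beta :
  safety_feasible N A B X U Rx Ru ZF x0 v alpha beta ->
  perf_feasible N A B X U Rx Ru ZF (extend0 N alpha) (extend0 N beta)
    0 x0 x0 v 0.
Proof.
move=> [feas_lt feas_N]; rewrite /perf_feasible perf_z00.
split; [by left | split=> //].
move=> i lt_iN; have [_ _ z_ok v_ok] := feas_lt i lt_iN.
by rewrite /extend0 add0n lt_iN; split.
Qed.

Hypothesis ZF_invariant : mximage (A + B *m K) ZF `<=` ZF.
Hypothesis ZF_state_admissible : ZF `<=` pdiff X Rx.
Hypothesis ZF_input_admissible : mximage K ZF `<=` pdiff U Ru.

Lemma perf_feasible_shifted (astar bstar : nat -> R) k x zprev vs xi x' :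
  (0 < N)%N ->
  (forall j, (N <= j)%N -> astar j = 0) ->
  (forall j, (N <= j)%N -> bstar j = 0) ->
  perf_feasible N A B X U Rx Ru ZF astar bstar k x zprev vs xi ->
  let z0 := perf_z0 xi x zprev in
  perf_feasible N A B X U Rx Ru ZF astar bstar k.+1 x' (traj A B z0 vs 1)
    (shifted_input z0 vs) 1.
Proof.
move=> N_gt0 astar_end bstar_end [_ [feas_lt feas_N]] z0.
rewrite /perf_feasible perf_z01; split; [by right | split].
- move=> i lt_iN; rewrite traj_shifted_input // addSnnS.
  case: (ltnP i.+1 N) => [lt_i1N | le_Ni1].
    by rewrite /shifted_input lt_i1N; apply: feas_lt.
  have eq_i1N : i.+1 = N by apply/eqP; rewrite eqn_leq lt_iN.
  rewrite /shifted_input eq_i1N ltnn.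
  rewrite astar_end ?bstar_end ?leq_addl // subr0 !scaleset1.
  split; first exact: ZF_state_admissible.
  by apply: ZF_input_admissible; exists (traj A B z0 vs N).
- rewrite traj_shifted_input_end //.
  by apply: ZF_invariant; exists (traj A B z0 vs N).
Qed.

End ShiftedSolution.

Theorem theorem1 (R : realType) (n m N : nat)
    (A : 'M[R]_n) (B : 'M[R]_(n, m)) (Q : 'M[R]_n) (Rw : 'M[R]_m)
    (P : 'M[R]_n) (K : 'M[R]_(m, n))
    (W Sig : 'M[R]_n) (ptx ptu : R)
    (X : set 'cV[R]_n) (U : set 'cV[R]_m) (ZF : set 'cV[R]_n)
    (x0 : 'cV[R]_n)
    (vstar : nat -> 'cV[R]_m) (alpha beta : nat -> R) :
  (* weighting matrices *)
  posdef Q -> posdef Rw ->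
  (* stabilizing solution of the DARE and corresponding gain *)
  P^T = P ->
  K = - (invmx (Rw + B^T *m P *m B) *m B^T *m P *m A) ->
  P = A^T *m P *m A + A^T *m P *m B *m K + Q ->
  schur_stable (A + B *m K) ->
  (* probabilistic reachable sets: Sig solves the Lyapunov equation with
     var(w) = W positive definite; levels ptx, ptu *)
  posdef W ->
  (A + B *m K) *m Sig *m (A + B *m K)^T - Sig + W = 0 ->
  0 < ptx -> 0 < ptu ->
  let Rx := ellipsoid (invmx Sig) ptx in
  let Ru := ellipsoid (invmx (K *m Sig *m K^T)) ptu in
  (* constraint sets *)
  convex0 X -> convex0 U ->
  (* terminal set *)
  mximage (A + B *m K) ZF `<=` ZF ->
  ZF `<=` pdiff X Rx ->
  mximage K ZF `<=` pdiff U Ru ->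
  (1 <= N)%N ->
  (* (vstar, alpha, beta) is an optimal solution of the safety-step LP
     (in particular the LP is feasible) *)
  safety_optimal N A B X U Rx Ru ZF x0 vstar alpha beta ->
  let astar := extend0 N alpha in
  let bstar := extend0 N beta in
  let feas := perf_feasible N A B X U Rx Ru ZF astar bstar in
  (* feasible at time 0 (x(0) = x0, z_1(-1) = x0) *)
  (exists vs xi, feas 0%N x0 x0 vs xi)
  /\
  (* feasible at k  ==>  feasible at k+1, for any disturbance w(k) *)
  (forall (k : nat) (x zprev : 'cV[R]_n) (vs : nat -> 'cV[R]_m) (xi : R),
     feas k x zprev vs xi ->
     forall w : 'cV[R]_n,
       let z0 := perf_z0 xi x zprev in
       let u := vs 0%N + K *m (x - z0) in
       exists vs' xi',
         feas k.+1 (A *m x + B *m u + w) (traj A B z0 vs 1) vs' xi')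
  /\
  (* hence feasible at every time along any closed-loop realization *)
  (forall (w : nat -> 'cV[R]_n) (xs zp : nat -> 'cV[R]_n)
          (sol : nat -> (nat -> 'cV[R]_m) * R),
     xs 0%N = x0 ->
     (forall k, zp k = zprev_seq A B xs x0 zp sol k) ->
     (forall k, (exists vs xi, feas k (xs k) (zp k) vs xi) ->
                feas k (xs k) (zp k) (sol k).1 (sol k).2) ->
     (forall k, xs k.+1 = A *m xs k + B *m ((sol k).1 0%N
                   + K *m (xs k - perf_z0 (sol k).2 (xs k) (zp k))) + w k) ->
     forall k, exists vs xi, feas k (xs k) (zp k) vs xi).
Proof.
move=> _ _ _ _ _ _ _ _ _ _ Rx Ru _ _ ZF_inv ZF_X ZF_U N_gt0 [safe _]
  astar bstar feas.
have feas0 : exists vs xi, feas 0%N x0 x0 vs xi.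
  by exists vstar, 0; apply: perf_feasible_safety.
have feas_step k x zprev vs xi : feas k x zprev vs xi -> forall w : 'cV[R]_n,
    let z0 := perf_z0 xi x zprev in
    let u := vs 0%N + K *m (x - z0) in
    exists vs' xi', feas k.+1 (A *m x + B *m u + w) (traj A B z0 vs 1) vs' xi'.
  move=> feas_k w z0 u; exists (shifted_input N A B K z0 vs), 1.
  apply: (perf_feasible_shifted ZF_inv ZF_X ZF_U _ N_gt0 _ _ feas_k) => j le_Nj;
    exact: extend0_ge.
split=> //; split=> // w xs zp sol xs0 zp_def sol_feas xs_next.
elim=> [|k IH]; first by rewrite xs0 zp_def.
have [vs' [xi' feas_k1]] := feas_step _ _ _ _ _ (sol_feas k IH) (w k).
by exists vs', xi'; rewrite zp_def xs_next.
Qed.
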